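(* Let $n\ge2$ and $D=\mathrm{pdiag}(d_1,\dots,d_n)$ with $d_1\le\dots\le d_n$. Then $\Gamma(D_\lambda)=D_\lambda\oplus D_\lambda^2$.
   Context: Max-plus conventions: $\varepsilon=-\infty$, $\oplus=\max$ (entrywise for matrices), $\otimes=+$, $(A\otimes B)_{ij}=\max_t(A_{it}+B_{tj})$, $A^k$ the $k$-fold max-plus power, $(\alpha\otimes A)_{ij}=\alpha+A_{ij}$. $\mathrm{pdiag}(d_1,\dots,d_n)$ is the matrix with real diagonal entries $d_i$ and off-diagonal entries equal to the real number $0$. For finite $A\in\mathbb{R}^{n\times n}$: $\lambda(A)$ is the maximum cycle mean $\max\{(a_{i_1i_2}+\dots+a_{i_ki_1})/k\}$ over $k\ge1$ and distinct $i_1,\dots,i_k\in[n]$; $A_\lambda=(-\lambda(A))\otimes A$; $\Gamma(A)=A\oplus A^2\oplus\dots\oplus A^n$. *)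

(* max-plus arithmetic over the extended reals \bar R,
   with epsilon = -oo, (+) = max, (x) = + (adde). *)
From HB Require Import structures.
From mathcomp Require Import all_boot all_order all_algebra.
From mathcomp Require Import constructive_ereal.
Set Implicit Arguments. Unset Strict Implicit. Unset Printing Implicit Defensive.
Import Order.TTheory GRing.Theory Num.Theory.
Local Open Scope ring_scope.
Local Open Scope ereal_scope.

Section MaxPlus.
Variable R : realFieldType.

Definition mp_add n (A B : 'M[\bar R]_n) : 'M[\bar R]_n :=
  \matrix_(i, j) Order.max (A i j) (B i j).

Definition mp_mul n (A B : 'M[\bar R]_n) : 'M[\bar R]_n :=
  \matrix_(i, j) \big[Order.max/-oo]_(t < n) (A i t + B t j).

Definition mp_id n : 'M[\bar R]_n :=
  \matrix_(i, j) if i == j then 0 else -oo.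

Definition mp_pow n (A : 'M[\bar R]_n) (k : nat) : 'M[\bar R]_n :=
  iter k (mp_mul A) (mp_id n).

Definition mp_Gamma n (A : 'M[\bar R]_n) : 'M[\bar R]_n :=
  \big[@mp_add n/const_mx -oo]_(1 <= k < n.+1) mp_pow A k.

Definition pdiag n (d : 'I_n -> R) : 'M[R]_n :=
  \matrix_(i, j) if i == j then d i else 0%R.

(* mean of the cycle c = (i_1,...,i_{k+1}) (indices taken cyclically) *)
Definition cycle_mean n k (A : 'M[R]_n) (c : k.+1.-tuple 'I_n) : R :=
  ((\sum_(s < k.+1) A (tnth c s) (tnth c (ordS s))) / k.+1%:R)%R.

Definition mcm n (A : 'M[R]_n) : \bar R :=
  \big[Order.max/-oo]_(k < n)
     \big[Order.max/-oo]_(c : k.+1.-tuple 'I_n | uniq c) (cycle_mean A c)%:E.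

(* A_lambda = (-lambda(A)) (x) A, as a max-plus matrix *)
Definition mp_normalize n (A : 'M[R]_n) : 'M[\bar R]_n :=
  \matrix_(i, j) (- mcm A + (A i j)%:E).

End MaxPlus.

(* After normalisation every entry of A := D_lambda is <= 0: the diagonal
   entries are a_i = d_i - lambda and the off-diagonal ones are c = -lambda,
   because lambda dominates every loop d_i and the 2-cycles of mean 0.  The
   envelope M with diagonal max(a_i, 2c) and off-diagonal c then satisfies
   A <= M and A (x) M <= M, so every power A^k is bounded by M; and M is
   attained by A (+) A^2, the value 2c on the diagonal being the 2-cycle
   through any other index. *)
From HB Require Import structures.
From mathcomp Require Import all_boot all_order all_algebra.
From mathcomp Require Import constructive_ereal.
Set Implicit Arguments. Unset Strict Implicit. Unset Printing Implicit Defensive.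
Import Order.TTheory GRing.Theory Num.Theory.
Local Open Scope ring_scope.

Section MaxPlusPowers.
Variables (R : realFieldType) (n : nat).
Implicit Types A B C M : 'M[\bar R]_n.
Local Open Scope ereal_scope.

Lemma mp_mul_id A : mp_mul A (mp_id R n) = A.
Proof.
apply/matrixP => i j; rewrite mxE (bigD1 j) //= big1.
  by rewrite mxE eqxx adde0 maxeNy.
by move=> t tj; rewrite mxE (negbTE tj) addeNy.
Qed.

Lemma mp_powS A k : mp_pow A k.+1 = mp_mul A (mp_pow A k).
Proof. by []. Qed.

Lemma mp_pow1 A : mp_pow A 1 = A.
Proof. exact: mp_mul_id. Qed.

Lemma mp_pow2 A : mp_pow A 2 = mp_mul A A.
Proof. by rewrite mp_powS mp_pow1. Qed.

Lemma mp_mulr_le A B C :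
  (forall i j, B i j <= C i j) -> forall i j, mp_mul A B i j <= mp_mul A C i j.
Proof.
move=> BC i j; rewrite !mxE; apply: bigmax_le => [|t _]; first exact: leNye.
by apply: le_trans (leeD2l _ (BC t j)) _; exact: le_bigmax.
Qed.

Lemma mp_pow_le A M :
  (forall i j, A i j <= M i j) -> (forall i j, mp_mul A M i j <= M i j) ->
  forall k i j, (0 < k)%N -> mp_pow A k i j <= M i j.
Proof.
move=> AM AMM; elim=> [|[|k] IHk] i j // _; first by rewrite mp_pow1; exact: AM.
by rewrite mp_powS; apply: le_trans (AMM i j); apply: mp_mulr_le => i' j'; exact: IHk.
Qed.

Lemma mp_Gamma_entry A i j :
  mp_Gamma A i j = \big[Order.max/-oo]_(1 <= k < n.+1) mp_pow A k i j.
Proof.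
by apply: (big_morph (fun M : 'M[\bar R]_n => M i j)) => [x y|]; rewrite !mxE.
Qed.

Lemma mp_Gamma_eq_add_mul A : (1 < n)%N ->
  (forall k i j, (0 < k)%N -> mp_pow A k i j <= mp_add A (mp_mul A A) i j) ->
  mp_Gamma A = mp_add A (mp_mul A A).
Proof.
move=> n_gt1 powA; apply/matrixP => i j.
rewrite mp_Gamma_entry big_ltn ?ltnS ?(ltnW n_gt1) // big_ltn ?ltnS //.
rewrite mp_pow1 mp_pow2 maxA.
rewrite [RHS]mxE; apply/max_idPl; rewrite big_seq.
apply: bigmax_le => [|k]; first exact: leNye.
rewrite mem_index_iota => /andP[k_ge2 _].
by move: (powA k i j); rewrite mxE; apply; exact: leq_trans k_ge2.
Qed.

End MaxPlusPowers.

Definition mp_pdiag (R : realFieldType) n (a : 'I_n -> \bar R) (c : \bar R) :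
  'M[\bar R]_n :=
  \matrix_(i, j) if i == j then a i else c.

Section MaxPlusPdiag.
Variables (R : realFieldType) (n : nat) (a : 'I_n -> \bar R) (c : \bar R).
Local Open Scope ereal_scope.

Hypotheses (a_le0 : forall i, a i <= 0) (c_le0 : c <= 0).

Let A := mp_pdiag a c.
Let envelope := mp_pdiag (fun i => Order.max (a i) (c + c)) c.

Lemma mp_pdiag_le_envelope i j : A i j <= envelope i j.
Proof. by rewrite !mxE; case: eqP; rewrite ?le_max ?lexx. Qed.

Lemma mp_mul_pdiag_envelope i j : mp_mul A envelope i j <= envelope i j.
Proof.
have envelope_diag_le0 k : Order.max (a k) (c + c) <= 0.
  by rewrite ge_max a_le0 (le_trans (geeDl _ c_le0)).
rewrite mxE; apply: bigmax_le => [|t _]; first exact: leNye.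
rewrite !mxE; case: (eqVneq i t) => [<-|it].
  by case: eqP => _; exact: geeDr.
case: (eqVneq t j) => [<-|tj]; first by rewrite (negbTE it) geeDl.
by case: eqP => _; rewrite ?le_max ?lexx ?orbT ?geeDl.
Qed.

Lemma mp_pdiag_envelope_le_add_mul i j : (1 < n)%N ->
  envelope i j <= mp_add A (mp_mul A A) i j.
Proof.
move=> n_gt1; rewrite !mxE; case: (eqVneq i j) => [<-|_]; last first.
  by rewrite le_max lexx.
have [t it] : exists t : 'I_n, i != t.
  pose o0 : 'I_n := Ordinal (ltnW n_gt1); pose o1 : 'I_n := Ordinal n_gt1.
  by case: (eqVneq i o0) => [->|?]; [exists o1 | exists o0].
rewrite ge_max !le_max lexx /=; apply/orP; right.
by apply: le_trans (le_bigmax _ _ t); rewrite !mxE (negbTE it) eq_sym (negbTE it).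
Qed.

Lemma mp_Gamma_pdiag : (1 < n)%N -> mp_Gamma A = mp_add A (mp_mul A A).
Proof.
move=> n_gt1; apply: mp_Gamma_eq_add_mul => // k i j k_gt0.
apply: le_trans (mp_pdiag_envelope_le_add_mul i j n_gt1).
exact: mp_pow_le mp_pdiag_le_envelope mp_mul_pdiag_envelope k i j k_gt0.
Qed.

End MaxPlusPdiag.

Section MaxCycleMean.
Variables (R : realFieldType) (n : nat).
Local Open Scope ereal_scope.

Lemma cycle_mean_le_mcm (A : 'M[R]_n) (k : 'I_n) (c : k.+1.-tuple 'I_n) :
  uniq c -> (cycle_mean A c)%:E <= mcm A.
Proof.
by move=> c_uniq; apply: le_trans (le_bigmax _ _ k); exact: le_bigmax_cond.
Qed.

Lemma mcm_neq_pinfty (A : 'M[R]_n) : mcm A != +oo.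
Proof.
have max_neq_pinfty (x y : \bar R) : x != +oo -> y != +oo -> Order.max x y != +oo.
  by rewrite maxEle; case: ifP.
apply: (big_ind (fun x => x != +oo)) => // k _.
exact: (big_ind (fun x => x != +oo)).
Qed.

Variable d : 'I_n -> R.

Lemma pdiag_le_mcm i : (d i)%:E <= mcm (pdiag d).
Proof.
have n_gt0 : (0 < n)%N := leq_ltn_trans (leq0n i) (ltn_ord i).
have := cycle_mean_le_mcm (pdiag d) (k := Ordinal n_gt0) (c := [tuple i]) isT.
by rewrite /cycle_mean big_ord1 !(tnth_nth i) /= mxE eqxx divr1.
Qed.

Lemma mcm_pdiag_ge0 : (1 < n)%N -> 0 <= mcm (pdiag d).
Proof.
move=> n_gt1; pose o0 : 'I_n := Ordinal (ltnW n_gt1).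
have := cycle_mean_le_mcm (pdiag d) (k := Ordinal n_gt1)
  (c := [tuple o0; Ordinal n_gt1]) isT.
by rewrite /cycle_mean !big_ord_recl big_ord0 /= !mxE /= !addr0 mul0r.
Qed.

Lemma mp_normalize_pdiag : mp_normalize (pdiag d) =
  mp_pdiag (fun i => - mcm (pdiag d) + (d i)%:E) (- mcm (pdiag d)).
Proof. by apply/matrixP => i j; rewrite !mxE; case: eqP => _; rewrite ?adde0. Qed.

Lemma mp_normalize_pdiag_diag_le0 i : - mcm (pdiag d) + (d i)%:E <= 0.
Proof.
have := pdiag_le_mcm i; have := mcm_neq_pinfty (pdiag d).
case: (mcm _) => [L| |] //= _; rewrite ?leeNy_eq // lee_fin => dL.
by rewrite -EFinD lee_fin addrC subr_le0.
Qed.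

End MaxCycleMean.

Theorem lemma5p2 (R : realFieldType) (n : nat) (d : 'I_n -> R)
  (hn : (2 <= n)%N)
  (hd : forall i j : 'I_n, (i <= j)%N -> d i <= d j) :
  mp_Gamma (mp_normalize (pdiag d)) =
  mp_add (mp_normalize (pdiag d))
         (mp_mul (mp_normalize (pdiag d)) (mp_normalize (pdiag d))).
Proof.
rewrite mp_normalize_pdiag; apply: mp_Gamma_pdiag => //.
  exact: mp_normalize_pdiag_diag_le0.
by rewrite oppe_le0 mcm_pdiag_ge0.
Qed.
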